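(* Let $\mu$ be a probabilistic frame for $\mathbb{R}^d$ with frame operator $S_\mu$, and let $h:\mathbb{R}^d\to\mathbb{R}^d$ be any measurable function with $\int_{\mathbb{R}^d}\|h(x)\|_2^2\,d\mu(x)<\infty$. Define $\psi_h:\mathbb{R}^d\to\mathbb{R}^d$ by $$\psi_h(x)=S_\mu^{-1}x+h(x)-\int_{\mathbb{R}^d}\langle S_\mu^{-1}x,y\rangle h(y)\,d\mu(y).$$ Then the pushforward $(\psi_h)_{\#}\mu$ is a transport dual to $\mu$, i.e. $(\psi_h)_{\#}\mu\in D_\mu$.
   Context: $P_2(\mathbb{R}^d)$ is the set of Borel probability measures $\mu$ on $\mathbb{R}^d$ with $\int\|x\|^2d\mu(x)<\infty$. A probability measure $\mu$ on $\mathbb{R}^d$ is a probabilistic frame if there exist $0<A\le B<\infty$ with $A\|x\|^2\le\int\langle x,y\rangle^2d\mu(y)\le B\|x\|^2$ for all $x\in\mathbb{R}^d$ (equivalently, $\mu\in P_2(\mathbb{R}^d)$ and the linear span of its support is $\mathbb{R}^d$). Its frame operator is the positive definite matrix $S_\mu=\int_{\mathbb{R}^d}xx^\top d\mu(x)$. For probability measures $\mu,\nu$, $\Gamma(\mu,\nu)$ denotes the set of couplings (probability measures on $\mathbb{R}^d\times\mathbb{R}^d$ with marginals $\mu$ and $\nu$). A measure $\nu\in P_2(\mathbb{R}^d)$ is a transport dual to the probabilistic frame $\mu$ if there exists $\gamma\in\Gamma(\mu,\nu)$ with $\iint xy^\top d\gamma(x,y)=I$; $D_\mu$ denotes the set of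 all transport duals to $\mu$. $T_\#\mu$ denotes the pushforward of $\mu$ by $T$. *)

(* R^d is modelled as d.-tuple R, which
   carries MathComp-Analysis' product (Borel) sigma-algebra generated by the
   coordinate projections. *)
From HB Require Import structures.
From mathcomp Require Import all_boot all_order all_algebra.
From mathcomp Require Import all_classical all_reals all_analysis.
Set Implicit Arguments. Unset Strict Implicit. Unset Printing Implicit Defensive.
Import Order.TTheory GRing.Theory Num.Theory.
Local Open Scope classical_set_scope.
Local Open Scope ring_scope.

Section frames.
Variables (R : realType) (d : nat).
Notation V := (d.-tuple R).

Definition dotv (x y : V) : R := \sum_(i < d) tnth x i * tnth y i.
Definition sqnorm (x : V) : R := dotv x x.

Definition tcol (x : V) : 'cV[R]_d := \col_i tnth x i.
Definition ctup (v : 'cV[R]_d) : V := [tuple v i 0 | i < d].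

Definition finite_second_moment (nu : {measure set V -> \bar R}) : Prop :=
  (\int[nu]_x (sqnorm x)%:E < +oo)%E.

Definition probabilistic_frame (mu : probability V R) : Prop :=
  exists A B : R, 0 < A /\ A <= B /\
    forall x : V,
      ((A * sqnorm x)%:E <= \int[mu]_y ((dotv x y) ^+ 2)%:E)%E /\
      (\int[mu]_y ((dotv x y) ^+ 2)%:E <= (B * sqnorm x)%:E)%E.

Definition frame_op (mu : {measure set V -> \bar R}) : 'M[R]_d :=
  \matrix_(i, j) Rintegral mu setT (fun x => tnth x i * tnth x j).

Definition psi (mu : {measure set V -> \bar R}) (h : V -> V) (x : V) : V :=
  let s := ctup (invmx (frame_op mu) *m tcol x) in
  [tuple tnth s i + tnth (h x) i
         - Rintegral mu setT (fun y => dotv s y * tnth (h y) i) | i < d].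

Definition coupling (gamma : probability (V * V)%type R)
    (mu nu : set V -> \bar R) : Prop :=
  (forall A, measurable A -> gamma (A `*` setT) = mu A) /\
  (forall B, measurable B -> gamma (setT `*` B) = nu B).

Definition transport_dual (mu : probability V R) (nu : set V -> \bar R) : Prop :=
  exists nu' : probability V R,
    (forall A, measurable A -> nu A = nu' A) /\
    finite_second_moment nu' /\
    exists gamma : probability (V * V)%type R,
      coupling gamma mu nu' /\
      \matrix_(i, j) Rintegral gamma setT (fun z => tnth z.1 i * tnth z.2 j)
        = 1%:M.

End frames.

From HB Require Import structures.
From mathcomp Require Import all_boot all_order all_algebra.
From mathcomp Require Import all_classical all_reals all_analysis.
From mathcomp Require Import measurable_realfun.
Import Order.TTheory GRing.Theory Num.Theory.
Set Implicit Arguments. Unset Strict Implicit. Unset Printing Implicit Defensive.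
Local Open Scope classical_set_scope.
Local Open Scope ring_scope.

(* Put S := S_mu and C := \int y h(y)^T dmu(y).  Unfolding the integral in the
   definition of psi_h gives psi_h(x) = (I - C^T) S^-1 x + h(x), hence
   \int x psi_h(x)^T dmu(x) = S (S^-1)^T (I - C) + C = I because S is symmetric.
   The coupling is the law of x |-> (x, psi_h(x)) under mu.  The upper frame bound
   puts the coordinates of x in L^2(mu), which with h in L^2(mu) makes all these
   integrals finite; the lower frame bound makes S invertible, since a kernel
   vector w of S has \int <w,y>^2 dmu(y) = w^T S w = 0. *)

Section square_integrable.
Context d (T : measurableType d) (R : realType) (mu : {measure set T -> \bar R}).

Lemma Lfun2_sqr_lty (f : T -> R) : measurable_fun setT f ->
  (\int[mu]_x (f x ^+ 2)%:E < +oo)%E -> f \in Lfun mu 2%:E.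
Proof.
move=> mf f2_lty; rewrite inE; apply/andP; split; first by rewrite inE.
rewrite inE /= /finite_norm unlock /Lnorm poweR_lty //.
by under eq_integral do rewrite /= powR_mulrn // real_normK ?num_real //.
Qed.

Lemma measurable_Lfun (p : \bar R) (f : T -> R) :
  f \in Lfun mu p -> measurable_fun setT f.
Proof. by move/sub_Lfun_mfun; rewrite inE. Qed.

Lemma Lfun2_integrable_mul (f g : T -> R) :
  f \in Lfun mu 2%:E -> g \in Lfun mu 2%:E ->
  mu.-integrable setT (EFin \o (fun x => f x * g x)).
Proof. by move=> f2 g2; apply/Lfun1_integrable; exact: Lfun2_mul_Lfun1. Qed.

Lemma Lfun_lincomb (p : \bar R) (I : Type) (r : seq I) (a : I -> R)
    (f : I -> T -> R) : (1 <= p)%E -> (forall i, f i \in Lfun mu p) ->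
  (fun x => \sum_(i <- r) a i * f i x) \in Lfun mu p.
Proof.
move=> p1 fp.
have -> : (fun x => \sum_(i <- r) a i * f i x) = \sum_(i <- r) a i *: f i.
  by rewrite fct_sumE.
by apply: rpred_sum => i _; exact: rpredZ.
Qed.

Lemma Rintegral_lincomb (I : Type) (r : seq I) (a : I -> R) (f : I -> T -> R) :
  (forall i, mu.-integrable setT (EFin \o f i)) ->
  \int[mu]_x (\sum_(i <- r) a i * f i x) = \sum_(i <- r) a i * \int[mu]_x f i x.
Proof.
move=> fi; have afi i : mu.-integrable setT (EFin \o (fun x => a i * f i x)).
  apply: (eq_integrable measurableT _ _ _
    (integrableZl measurableT (a i) (fi i))).
  by move=> x _; rewrite /= EFinM.
transitivity (fine (\sum_(i <- r) \int[mu]_x (a i * f i x)%:E)).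
  congr fine; rewrite -integral_sum //.
  by apply: eq_integral => x _; rewrite sumEFin.
rewrite -sum_fine => [|i _]; last exact: integrable_fin_num (afi i).
by apply: eq_bigr => i _; exact: RintegralZl.
Qed.

End square_integrable.

Section tuple_norm.
Context (R : realType) (n : nat).
Implicit Types x : n.-tuple R.

Lemma sqnormE x : sqnorm x = \sum_i tnth x i ^+ 2.
Proof. by apply: eq_bigr => i _; rewrite expr2. Qed.

Lemma sqnorm_ge0 x : 0 <= sqnorm x.
Proof. by rewrite sqnormE sumr_ge0 // => i _; exact: sqr_ge0. Qed.

Lemma tnth_sqr_le_sqnorm x i : tnth x i ^+ 2 <= sqnorm x.
Proof.
by rewrite sqnormE (bigD1 i) //= lerDl sumr_ge0 // => j _; exact: sqr_ge0.
Qed.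

Lemma sqnorm_eq0 x i : sqnorm x = 0 -> tnth x i = 0.
Proof.
move=> x0; apply/eqP; rewrite -sqrf_eq0 eq_le sqr_ge0 andbT.
by rewrite -x0 tnth_sqr_le_sqnorm.
Qed.

Lemma measurable_sqnorm : measurable_fun setT (@sqnorm R n).
Proof.
rewrite /sqnorm /dotv; apply: measurable_sum => i.
by apply: measurable_funM; exact: measurable_tnth.
Qed.

Lemma ctupK : cancel (@ctup R n) (@tcol R n).
Proof. by move=> v; apply/colP => i; rewrite !mxE tnth_mktuple. Qed.

End tuple_norm.

Definition cross_moment d (T : measurableType d) (R : realType)
    (mu : {measure set T -> \bar R}) m n
    (f : T -> m.-tuple R) (g : T -> n.-tuple R) : 'M[R]_(m, n) :=
  \matrix_(i, j) \int[mu]_x (tnth (f x) i * tnth (g x) j).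

Section tuple_moments.
Context d (T : measurableType d) (R : realType) (mu : {measure set T -> \bar R}).
Context (n : nat).

Lemma Lfun2_tnth (f : T -> n.-tuple R) : measurable_fun setT f ->
    (\int[mu]_x (sqnorm (f x))%:E < +oo)%E ->
  forall i, (fun x => tnth (f x) i) \in Lfun mu 2%:E.
Proof.
move=> mf f2 i; have mfi : measurable_fun setT (fun x => tnth (f x) i).
  exact: measurableT_comp (measurable_tnth i) mf.
apply: Lfun2_sqr_lty => //; apply: le_lt_trans f2.
apply: ge0_le_integral => //.
- by move=> x _; rewrite lee_fin sqr_ge0.
- by apply/measurable_EFinP; exact: measurable_funX.
- apply/measurable_EFinP; apply: measurableT_comp mf; exact: measurable_sqnorm.
- by move=> x _; rewrite lee_fin tnth_sqr_le_sqnorm.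
Qed.

Lemma sqnorm_integral_lty (f : T -> n.-tuple R) :
    (forall i, (fun x => tnth (f x) i) \in Lfun mu 2%:E) ->
  (\int[mu]_x (sqnorm (f x))%:E < +oo)%E.
Proof.
move=> f2; apply: integrable_lty => //.
apply: (eq_integrable measurableT (fun x => \sum_i (tnth (f x) i ^+ 2)%:E)).
  by move=> x _; rewrite sqnormE sumEFin.
by apply: integrable_sum => // i _; exact: Lfun2_integrable_sqr.
Qed.

Lemma measurable_Lfun_tnth (p : \bar R) (f : T -> n.-tuple R) :
  (forall i, (fun x => tnth (f x) i) \in Lfun mu p) -> measurable_fun setT f.
Proof.
by move=> fp; apply/measurable_fun_tnthP => i; exact: measurable_Lfun (fp i).
Qed.

End tuple_moments.

Section dual_map.
Context (R : realType) (d : nat) (mu : {measure set (d.-tuple R) -> \bar R}).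
Notation V := (d.-tuple R).

Lemma frame_op_tr : (frame_op mu)^T = frame_op mu.
Proof.
by apply/matrixP => i j; rewrite !mxE; apply: eq_Rintegral => y _; rewrite mulrC.
Qed.

Hypothesis coord2 : forall i, (fun y : V => tnth y i) \in Lfun mu 2%:E.
Variable h : V -> V.
Hypothesis h2 : forall j, (fun y => tnth (h y) j) \in Lfun mu 2%:E.

Section affine.
Variables (M : 'M[R]_d) (g : V -> V).
Hypothesis gE : forall x j, tnth (g x) j = \sum_l M j l * tnth x l + tnth (h x) j.

Let lin_Lfun2 j : (fun x : V => \sum_l M j l * tnth x l) \in Lfun mu 2%:E.
Proof.
apply: (@Lfun_lincomb _ _ _ _ _ _ _ _ (fun l x => tnth x l)) => //.
by rewrite lee1n.
Qed.

Lemma Lfun2_tnth_affine j : (fun x => tnth (g x) j) \in Lfun mu 2%:E.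
Proof.
rewrite (_ : (fun x => _) = (fun x => \sum_l M j l * tnth x l + tnth (h x) j)).
  by apply: rpredD => //; rewrite lee1n.
by apply: funext => x; rewrite gE.
Qed.

Lemma cross_moment_affine :
  cross_moment mu id g = frame_op mu *m M^T + cross_moment mu id h.
Proof.
apply/matrixP => i j; rewrite !mxE.
transitivity (\int[mu]_x (tnth x i * (\sum_l M j l * tnth x l)
                          + tnth x i * tnth (h x) j)).
  by apply: eq_Rintegral => x _; rewrite gE mulrDr.
rewrite RintegralD //; [|exact: Lfun2_integrable_mul..]; congr (_ + _).
transitivity (\int[mu]_x (\sum_l M j l * (tnth x i * tnth x l))).
  apply: eq_Rintegral => x _; rewrite mulr_sumr.
  by apply: eq_bigr => l _; rewrite mulrCA.
rewrite Rintegral_lincomb => [|l]; last exact: Lfun2_integrable_mul.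
by apply: eq_bigr => l _; rewrite !mxE mulrC.
Qed.

End affine.

Lemma tnth_psi x j : tnth (psi mu h x) j =
  \sum_l ((1%:M - (cross_moment mu id h)^T) *m invmx (frame_op mu)) j l * tnth x l
  + tnth (h x) j.
Proof.
set C := cross_moment mu id h; set s := ctup (invmx (frame_op mu) *m tcol x).
have int_s : \int[mu]_y (dotv s y * tnth (h y) j) = \sum_k tnth s k * C k j.
  transitivity (\int[mu]_y (\sum_k tnth s k * (tnth y k * tnth (h y) j))).
    apply: eq_Rintegral => y _; rewrite mulr_suml.
    by apply: eq_bigr => k _; rewrite mulrA.
  rewrite Rintegral_lincomb => [|k]; last exact: Lfun2_integrable_mul.
  by apply: eq_bigr => k _; rewrite mxE.
have lin_s : \sum_l ((1%:M - C^T) *m invmx (frame_op mu)) j l * tnth x l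
    = ((1%:M - C^T) *m tcol s) j 0.
  by rewrite ctupK mulmxA mxE; apply: eq_bigr => l _; rewrite [tcol x l 0]mxE.
rewrite /psi tnth_mktuple -/s int_s lin_s mulmxBl mul1mx !mxE addrAC.
by congr (_ - _ + _); apply: eq_bigr => k _; rewrite !mxE mulrC.
Qed.

Lemma cross_moment_psi :
  frame_op mu \in unitmx -> cross_moment mu id (psi mu h) = 1%:M.
Proof.
move=> S_unit; rewrite (cross_moment_affine tnth_psi).
rewrite trmx_mul trmx_inv frame_op_tr.
by rewrite mulmxA mulmxV // mul1mx linearB /= trmx1 trmxK subrK.
Qed.

End dual_map.

Section frame.
Context (R : realType) (d : nat) (mu : probability (d.-tuple R) R).
Notation V := (d.-tuple R).

Hypothesis mu_frame : probabilistic_frame mu.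

Lemma frame_tnth_Lfun2 i : (fun y : V => tnth y i) \in Lfun mu 2%:E.
Proof.
have [A [B [_ [_ bounds]]]] := mu_frame.
pose e : V := [tuple (i == j)%:R | j < d].
have dot_e y : dotv e y = tnth y i.
  rewrite /dotv (bigD1 i) //= big1 ?addr0 => [|j ji]; rewrite tnth_mktuple.
    by rewrite eqxx mul1r.
  by rewrite eq_sym (negbTE ji) mul0r.
apply: Lfun2_sqr_lty; first exact: measurable_tnth.
under eq_integral do rewrite -dot_e.
exact: le_lt_trans (proj2 (bounds e)) (ltry _).
Qed.

Lemma dotv_Lfun2 (w : V) : dotv w \in Lfun mu 2%:E.
Proof.
apply: (@Lfun_lincomb _ _ _ _ _ _ _ _ (fun i y => tnth y i)).
  by rewrite lee1n.
exact: frame_tnth_Lfun2.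
Qed.

Lemma Rintegral_dotv_sqr (w : V) :
  \int[mu]_y (dotv w y ^+ 2) = \sum_i tnth w i * (frame_op mu *m tcol w) i 0.
Proof.
transitivity (\int[mu]_y (\sum_i tnth w i * (tnth y i * dotv w y))).
  apply: eq_Rintegral => y _; rewrite expr2 {1}/dotv mulr_suml.
  by apply: eq_bigr => i _; rewrite mulrA.
rewrite Rintegral_lincomb => [|i]; last first.
  exact: Lfun2_integrable_mul (frame_tnth_Lfun2 i) (dotv_Lfun2 w).
apply: eq_bigr => i _; congr (_ * _); rewrite mxE.
transitivity (\int[mu]_y (\sum_k tnth w k * (tnth y i * tnth y k))).
  apply: eq_Rintegral => y _; rewrite /dotv mulr_sumr.
  by apply: eq_bigr => k _; rewrite mulrCA.
rewrite Rintegral_lincomb => [|k]; last first.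
  exact: Lfun2_integrable_mul (frame_tnth_Lfun2 i) (frame_tnth_Lfun2 k).
by apply: eq_bigr => k _; rewrite !mxE mulrC.
Qed.

Lemma frame_op_unit : frame_op mu \in unitmx.
Proof.
rewrite -row_free_unit -kermx_eq0; apply/eqP/row_matrixP => k; rewrite row0.
set v := row k _.
have vS : v *m frame_op mu = 0 by rewrite -row_mul mulmx_ker row0.
pose w : V := ctup v^T.
have Sw0 : frame_op mu *m tcol w = 0.
  by rewrite ctupK -[in LHS]frame_op_tr -trmx_mul vS trmx0.
have [A [B [A_gt0 [_ bounds]]]] := mu_frame.
have := proj1 (bounds w).
have w2 := Lfun2_integrable_sqr (dotv_Lfun2 w).
rewrite -(fineK (integrable_fin_num measurableT w2)).
rewrite -/(Rintegral mu setT (fun y => dotv w y ^+ 2)) Rintegral_dotv_sqr Sw0.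
rewrite big1 => [|i _]; last by rewrite mxE mulr0.
rewrite lee_fin pmulr_rle0 // => w_le0.
have w0 : sqnorm w = 0 by apply/eqP; rewrite eq_le w_le0 sqnorm_ge0.
by apply/rowP => j; have := sqnorm_eq0 j w0; rewrite tnth_mktuple !mxE.
Qed.

End frame.

Section pushforward_probability.
Context d1 d2 (T1 : measurableType d1) (T2 : measurableType d2) (R : realType).
Variables (P : probability T1 R) (phi : T1 -> T2).
Hypothesis mphi : measurable_fun setT phi.

Definition pushforward_probability : probability T2 R :=
  distribution P (mfun_Sub (mem_set mphi)).

Lemma Rintegral_pushforward (f : T2 -> R) : measurable_fun setT f ->
    P.-integrable setT (EFin \o (f \o phi)) ->
  \int[pushforward_probability]_y f y = \int[P]_x f (phi x).
Proof.
move=> mf fi; rewrite /Rintegral /= integral_pushforward //.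
exact/measurable_EFinP.
Qed.

Lemma cross_moment_pushforward m n (f : T2 -> m.-tuple R) (g : T2 -> n.-tuple R) :
    measurable_fun setT f -> measurable_fun setT g ->
    (forall i j, P.-integrable setT
       (EFin \o (fun x => tnth (f (phi x)) i * tnth (g (phi x)) j))) ->
  cross_moment pushforward_probability f g = cross_moment P (f \o phi) (g \o phi).
Proof.
move=> mf mg fgi; apply/matrixP => i j; rewrite !mxE Rintegral_pushforward //.
- apply: measurable_funM.
    exact: measurableT_comp (measurable_tnth i) mf.
  exact: measurableT_comp (measurable_tnth j) mg.
- exact: fgi.
Qed.

End pushforward_probability.

Section graph_coupling.
Context (R : realType) (d : nat) (mu : probability (d.-tuple R) R).
Variables (phi : d.-tuple R -> d.-tuple R) (mphi : measurable_fun setT phi).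

Lemma pushforward_second_moment :
    (\int[mu]_x (sqnorm (phi x))%:E < +oo)%E ->
  finite_second_moment (pushforward_probability mu mphi).
Proof.
rewrite /finite_second_moment ge0_integral_pushforward //.
- by apply/measurable_EFinP; exact: measurable_sqnorm.
- by move=> y _; rewrite lee_fin sqnorm_ge0.
Qed.

Variable mgraph : measurable_fun setT (fun x => (x, phi x)).

Lemma graph_coupling :
  coupling (pushforward_probability mu mgraph) mu
           (pushforward_probability mu mphi).
Proof.
split=> A mA; rewrite /= /pushforward; congr (mu _).
  by apply/seteqP; split=> x /=; [case | split].
by apply/seteqP; split=> x /=; [case | split].
Qed.

End graph_coupling.

Theorem mainTheorem1 (R : realType) (d : nat) (mu : probability (d.-tuple R) R)
    (h : d.-tuple R -> d.-tuple R) :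
  probabilistic_frame mu ->
  measurable_fun setT h ->
  (\int[mu]_x (sqnorm (h x))%:E < +oo)%E ->
  transport_dual mu (pushforward mu (psi mu h)).
Proof.
move=> mu_frame mh h_moment.
have coord2 := frame_tnth_Lfun2 mu_frame.
have h2 := Lfun2_tnth mh h_moment.
have psi2 := Lfun2_tnth_affine coord2 h2 (tnth_psi coord2 h2).
have mpsi := measurable_Lfun_tnth psi2.
have mgraph := measurable_fun_pair (@measurable_id _ _ setT) mpsi.
exists (pushforward_probability mu mpsi); split => //; split.
  exact: pushforward_second_moment (sqnorm_integral_lty psi2).
exists (pushforward_probability mu mgraph); split; first exact: graph_coupling.
rewrite -(cross_moment_psi coord2 h2 (frame_op_unit mu_frame)).
apply: cross_moment_pushforward => [||i j].
- exact: measurable_fst.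
- exact: measurable_snd.
- exact: Lfun2_integrable_mul.
Qed.
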